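(* Let $A$ be a unital associative $\Bbbk$-algebra, $a\in Z(A)$, $\sigma\in Aut(A)$, and $W_{a,\sigma}$ the generalized Weyl algebra. Let $S\subseteq Z(A)$ be the set of elements $\sigma^n(a^m)$ with $n\in\mathbb{Z}$, $m\in\mathbb{N}$, and let $(W_{a,\sigma})_S$ be the localization of $W_{a,\sigma}$ at $S$. Let $V$ be an arbitrary (right) $W_{a,\sigma}$-module and $h=ht_{a,\sigma}(V)$. Then $V_S:=V\otimes_{W_{a,\sigma}}(W_{a,\sigma})_S$ is isomorphic to $(V/V^{[h]})_S$.
   Context: The generalized Weyl algebra $W_{a,\sigma}$ is the algebra generated by $A$ and indeterminates $x,y$ with relations $yx=a$, $xy=\sigma(a)$, $xu=\sigma(u)x$, $y\sigma(u)=uy$ for $u\in A$. For a right $W_{a,\sigma}$-module $V$ and $\ell\in\mathbb{N}$, set $V^{[\ell]}=\{v\in V : v\triangleleft a\sigma^{-1}(a)\cdots\sigma^{-\ell}(a)=0\}$, and $V^{[\infty]}=\bigcup_{\ell\geq 0}V^{[\ell]}$. The height $ht_{a,\sigma}(V)$ is the smallest integer $\ell$ with $V^{[\ell]}=V^{[\infty]}$, and $\infty$ if no such integer exists (in which case $V^{[h]}$ means $V^{[\infty]}$). For a $W_{a,\sigma}$-module $U$, $U_S:=U\otimes_{W_{a,\sigma}}(W_{a,\sigma})_S$. *)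

From HB Require Import structures.
From mathcomp Require Import all_boot all_order all_algebra.
Set Implicit Arguments. Unset Strict Implicit. Unset Printing Implicit Defensive.
Import Order.TTheory GRing.Theory Num.Theory.
Local Open Scope ring_scope.

(* Unital ring morphism (f 0 = 0 follows from additivity). *)
Definition rmorph_prop (R S : pzRingType) (f : R -> S) : Prop :=
  (forall u v, f (u + v) = f u + f v) /\
  (forall u v, f (u * v) = f u * f v) /\ f 1 = 1.

Definition additive_prop (U V : zmodType) (f : U -> V) : Prop :=
  forall u v, f (u + v) = f u + f v.

Definition rmodule_prop (R : pzRingType) (V : zmodType) (act : V -> R -> V) : Prop :=
  (forall v, act v 1 = v) /\
  (forall v r s, act v (r * s) = act (act v r) s) /\
  (forall v w r, act (v + w) r = act v r + act w r) /\
  (forall v r s, act v (r + s) = act v r + act v s).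

Definition central (A : pzRingType) (a : A) : Prop := forall u, a * u = u * a.

Definition kalg_structure (k : fieldType) (A : pzRingType) (eta : k -> A) : Prop :=
  rmorph_prop eta /\ forall c, central (eta c).

Definition kalg_aut (k : fieldType) (A : pzRingType) (eta : k -> A)
  (sigma sigma' : A -> A) : Prop :=
  rmorph_prop sigma /\ (forall c, sigma (eta c) = eta c) /\
  cancel sigma sigma' /\ cancel sigma' sigma.

Definition zpow_fun (A : Type) (sigma sigma' : A -> A) (n : int) (u : A) : A :=
  match n with
  | Posz m => iter m sigma u
  | Negz m => iter m.+1 sigma' u
  end.

(* W (with iota : A -> W and x, y) is the generalized Weyl algebra W_{a,sigma}:
   the ring generated by A and x, y subject to
   y x = a, x y = sigma(a), x u = sigma(u) x, y sigma(u) = u y,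
   i.e. it satisfies the universal property of this presentation. *)
Definition is_GWA (A W : pzRingType) (a : A) (sigma : A -> A)
  (iota : A -> W) (x y : W) : Prop :=
  rmorph_prop iota /\
  y * x = iota a /\ x * y = iota (sigma a) /\
  (forall u, x * iota u = iota (sigma u) * x) /\
  (forall u, y * iota (sigma u) = iota u * y) /\
  forall (R : pzRingType) (f : A -> R) (X Y : R),
    rmorph_prop f -> Y * X = f a -> X * Y = f (sigma a) ->
    (forall u, X * f u = f (sigma u) * X) ->
    (forall u, Y * f (sigma u) = f u * Y) ->
    exists g : W -> R,
      [/\ rmorph_prop g, (forall u, g (iota u) = f u), g x = X, g y = Y &
        forall g' : W -> R, rmorph_prop g' -> (forall u, g' (iota u) = f u) ->
          g' x = X -> g' y = Y -> forall w, g' w = g w].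

Definition inverts (W R : pzRingType) (P : W -> Prop) (psi : W -> R) : Prop :=
  forall s, P s -> exists t, psi s * t = 1 /\ t * psi s = 1.

Definition is_localization (W WS : pzRingType) (P : W -> Prop) (phi : W -> WS) : Prop :=
  rmorph_prop phi /\ inverts P phi /\
  forall (R : pzRingType) (psi : W -> R), rmorph_prop psi -> inverts P psi ->
    exists chi : WS -> R,
      [/\ rmorph_prop chi, (forall w, chi (phi w) = psi w) &
        forall chi' : WS -> R, rmorph_prop chi' -> (forall w, chi' (phi w) = psi w) ->
          forall z, chi' z = chi z].

Definition balanced (W WS : pzRingType) (phi : W -> WS) (V : zmodType)
  (actV : V -> W -> V) (G : zmodType) (beta : V -> WS -> G) : Prop :=
  (forall v v' s, beta (v + v') s = beta v s + beta v' s) /\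
  (forall v s s', beta v (s + s') = beta v s + beta v s') /\
  (forall v w s, beta (actV v w) s = beta v (phi w * s)).

Definition is_tensor (W WS : pzRingType) (phi : W -> WS) (V : zmodType)
  (actV : V -> W -> V) (T : zmodType) (tau : V -> WS -> T)
  (actT : T -> WS -> T) : Prop :=
  [/\ rmodule_prop actT, balanced phi actV tau,
    (forall v s s', actT (tau v s) s' = tau v (s * s')) &
    forall (G : zmodType) (beta : V -> WS -> G), balanced phi actV beta ->
      exists g : T -> G,
        [/\ additive_prop g, (forall v s, g (tau v s) = beta v s) &
          forall g' : T -> G, additive_prop g' -> (forall v s, g' (tau v s) = beta v s) ->
            forall t, g' t = g t]].

Definition Vlevel (A W : pzRingType) (iota : A -> W) (a : A) (sigma' : A -> A)
  (V : zmodType) (actV : V -> W -> V) (l : nat) (v : V) : Prop :=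
  actV v (iota (\prod_(i < l.+1) iter i sigma' a)) = 0.

Definition Vinf (A W : pzRingType) (iota : A -> W) (a : A) (sigma' : A -> A)
  (V : zmodType) (actV : V -> W -> V) (v : V) : Prop :=
  exists l, Vlevel iota a sigma' actV l v.

Definition is_height (A W : pzRingType) (iota : A -> W) (a : A) (sigma' : A -> A)
  (V : zmodType) (actV : V -> W -> V) (l : nat) : Prop :=
  (forall v, Vlevel iota a sigma' actV l v <-> Vinf iota a sigma' actV v) /\
  forall l', (forall v, Vlevel iota a sigma' actV l' v <-> Vinf iota a sigma' actV v) ->
    (l <= l')%N.

(* V^{[h]} with h = ht_{a,sigma}(V); V^{[infinity]} when the height is infinite *)
Definition Vheight (A W : pzRingType) (iota : A -> W) (a : A) (sigma' : A -> A)
  (V : zmodType) (actV : V -> W -> V) (v : V) : Prop :=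
  (exists l, is_height iota a sigma' actV l /\ Vlevel iota a sigma' actV l v) \/
  ((forall l, ~ is_height iota a sigma' actV l) /\ Vinf iota a sigma' actV v).

Definition is_quotient (W : pzRingType) (V : zmodType) (actV : V -> W -> V)
  (P : V -> Prop) (Q : zmodType) (actQ : Q -> W -> Q) (pi : V -> Q) : Prop :=
  [/\ rmodule_prop actQ, additive_prop pi,
    (forall v w, pi (actV v w) = actQ (pi v) w),
    (forall q, exists v, pi v = q) &
    (forall v, pi v = 0 <-> P v)].

From HB Require Import structures.
From mathcomp Require Import all_boot all_order all_algebra.
From Stdlib Require Import ClassicalEpsilon.
Set Implicit Arguments. Unset Strict Implicit. Unset Printing Implicit Defensive.
Import GRing.Theory.
Local Open Scope ring_scope.

(* If [v <| p = 0] where [p = a sigma^-1(a) ... sigma^-l(a)] and [p] becomes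
   invertible in [W_S], then [v (x) s = (v <| p) (x) p^-1 s = 0]. Hence every
   element of [V^[h]] (indeed of [V^[oo]]) dies in [V_S], and since [- (x) W_S]
   is right exact, [V_S] is the tensor product of [V / V^[h]] with [W_S]. *)

Section AdditiveProp.
Variables (U V : zmodType) (f : U -> V).
Hypothesis f_add : additive_prop f.

Lemma additive_prop0 : f 0 = 0.
Proof. by apply: (@addrI _ (f 0)); rewrite -f_add !addr0. Qed.

Lemma additive_propN u : f (- u) = - f u.
Proof.
by apply: (@addrI _ (f u)); rewrite -f_add !subrr additive_prop0.
Qed.

Lemma additive_propB u v : f (u - v) = f u - f v.
Proof. by rewrite f_add additive_propN. Qed.

End AdditiveProp.

Lemma rmorph_prop_comp (R S T : pzRingType) (f : R -> S) (g : S -> T) :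
  rmorph_prop f -> rmorph_prop g -> rmorph_prop (g \o f).
Proof.
move=> [fD [fM f1]] [gD [gM g1]].
by split; [|split] => [u v|u v|] /=; rewrite ?fD ?gD ?fM ?gM ?f1 ?g1.
Qed.

Lemma rmorph_prop_prod (R S : pzRingType) (f : R -> S) n (F : nat -> R) :
  rmorph_prop f -> f (\prod_(i < n) F i) = \prod_(i < n) f (F i).
Proof. by move=> [_ [fM f1]]; apply: (big_morph f fM f1). Qed.

Lemma prod_rinvertible (R : pzRingType) n (F : nat -> R) :
  (forall i, exists t, F i * t = 1) -> exists t, \prod_(i < n) F i * t = 1.
Proof.
move=> F_rinv; elim: n => [|n [t Ft]]; first by exists 1; rewrite big_ord0 mulr1.
have [u Fu] := F_rinv n.
by exists (u * t); rewrite big_ord_recr /= -mulrA (mulrA (F n)) Fu mul1r.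
Qed.

Section Balanced.
Variables (W WS : pzRingType) (phi : W -> WS) (V : zmodType) (actV : V -> W -> V).

Lemma balanced_postcomp (G H : zmodType) (beta : V -> WS -> G) (g : G -> H) :
  balanced phi actV beta -> additive_prop g ->
  balanced phi actV (fun v s => g (beta v s)).
Proof.
move=> [bD1 [bD2 bA]] g_add.
by split; [|split] => *; rewrite ?bD1 ?bD2 ?bA ?g_add.
Qed.

Lemma balanced_precomp (Q G : zmodType) (actQ : Q -> W -> Q) (pi : V -> Q)
    (beta : Q -> WS -> G) :
  additive_prop pi -> (forall v w, pi (actV v w) = actQ (pi v) w) ->
  balanced phi actQ beta -> balanced phi actV (fun v s => beta (pi v) s).
Proof.
move=> pi_add pi_act [bD1 [bD2 bA]].
by split; [|split] => *; rewrite ?pi_add ?bD1 ?bD2 ?pi_act ?bA.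
Qed.

Lemma balanced_annihilated (G : zmodType) (beta : V -> WS -> G) v w t s :
  balanced phi actV beta -> actV v w = 0 -> phi w * t = 1 -> beta v s = 0.
Proof.
move=> [bD1 [_ bA]] vw0 wt1.
rewrite -[s]mul1r -wt1 -mulrA -bA vw0.
by apply: (additive_prop0 (f := beta^~ (t * s))) => u u'; rewrite bD1.
Qed.

End Balanced.

Section TensorProduct.
Variables (W WS : pzRingType) (phi : W -> WS) (V : zmodType) (actV : V -> W -> V).
Variables (T : zmodType) (tau : V -> WS -> T) (actT : T -> WS -> T).
Hypothesis tensorT : is_tensor phi actV tau actT.

Lemma tensor_lift (G : zmodType) (beta : V -> WS -> G) :
  balanced phi actV beta ->
  exists g : T -> G, additive_prop g /\ forall v s, g (tau v s) = beta v s.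
Proof.
case: tensorT => _ _ _ univ /univ [g [g_add g_tau _]].
by exists g.
Qed.

Lemma tensor_ext (G : zmodType) (g g' : T -> G) :
  additive_prop g -> additive_prop g' ->
  (forall v s, g (tau v s) = g' (tau v s)) -> g =1 g'.
Proof.
case: tensorT => _ tau_bal _ univ g_add g'_add gg' t.
have [h [_ _ h_uniq]] := univ _ _ (balanced_postcomp tau_bal g'_add).
by rewrite (h_uniq g) // (h_uniq g').
Qed.

Lemma tensor_act_additive s : additive_prop (actT^~ s).
Proof. by case: tensorT => [[_ [_ [actD _]]] _ _ _]. Qed.

End TensorProduct.

Section TensorQuotient.
Variables (W WS : pzRingType) (phi : W -> WS) (V : zmodType) (actV : V -> W -> V).
Variables (VS : zmodType) (tauV : V -> WS -> VS) (actVS : VS -> WS -> VS).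
Hypothesis tensorV : is_tensor phi actV tauV actVS.
Variables (P : V -> Prop) (Q : zmodType) (actQ : Q -> W -> Q) (pi : V -> Q).
Hypothesis quotientQ : is_quotient actV P actQ pi.
Variables (QS : zmodType) (tauQ : Q -> WS -> QS) (actQS : QS -> WS -> QS).
Hypothesis tensorQ : is_tensor phi actQ tauQ actQS.
Hypothesis tauV_P : forall v s, P v -> tauV v s = 0.

Let pi_add : additive_prop pi. Proof. by case: quotientQ. Qed.
Let pi_act v w : pi (actV v w) = actQ (pi v) w. Proof. by case: quotientQ. Qed.

Lemma tauV_quotient_eq v v' s : pi v = pi v' -> tauV v s = tauV v' s.
Proof.
case: quotientQ => _ _ _ _ pi_ker vv'.
have [vD _] : balanced phi actV tauV by case: tensorV.
have P_diff : P (v - v') by apply/pi_ker; rewrite additive_propB // vv' subrr.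
by rewrite -[v](subrK v') vD tauV_P // add0r.
Qed.

Lemma balanced_quotient_section (rep : Q -> V) :
  (forall q, pi (rep q) = q) -> balanced phi actQ (fun q s => tauV (rep q) s).
Proof.
move=> repK; have [vD1 [vD2 vA]] : balanced phi actV tauV by case: tensorV.
split; [|split] => [q q' s|q s s'|q w s]; rewrite ?vD2 //.
  by rewrite -vD1; apply: tauV_quotient_eq; rewrite pi_add !repK.
by rewrite -vA; apply: tauV_quotient_eq; rewrite pi_act !repK.
Qed.

Lemma tensor_quotient_iso :
  exists f : VS -> QS,
    [/\ additive_prop f, bijective f &
      forall t s, f (actVS t s) = actQS (f t) s].
Proof.
have [rep repK] : exists rep : Q -> V, forall q, pi (rep q) = q.
  have pi_surj : forall q, exists v, pi v = q by case: quotientQ.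
  by exists (fun q => proj1_sig (constructive_indefinite_description _ (pi_surj q)))
    => q; case: constructive_indefinite_description.
have tauQ_bal : balanced phi actQ tauQ by case: tensorQ.
have [f [f_add f_tau]] :=
  tensor_lift tensorV (balanced_precomp pi_add pi_act tauQ_bal).
have [g [g_add g_tau]] := tensor_lift tensorQ (balanced_quotient_section repK).
have fgK : cancel g f.
  apply: (tensor_ext tensorQ) => [u v|//|q s]; first by rewrite g_add f_add.
  by rewrite g_tau f_tau repK.
have gfK : cancel f g.
  apply: (tensor_ext tensorV) => [u v|//|v s]; first by rewrite f_add g_add.
  by rewrite f_tau g_tau; apply: tauV_quotient_eq; rewrite repK.
exists f; split => //; first by exists g.
move=> t s; move: t; apply: (tensor_ext tensorV) => [u v|u v|v s'].
- by rewrite (tensor_act_additive tensorV) f_add.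
- by rewrite f_add (tensor_act_additive tensorQ).
- case: tensorV => _ _ actV_tau _; case: tensorQ => _ _ actQ_tau _.
  by rewrite actV_tau !f_tau actQ_tau.
Qed.

End TensorQuotient.

Section LevelVanishing.
Variables (A W WS : pzRingType) (iota : A -> W) (phi : W -> WS).
Variables (a : A) (sigma sigma' : A -> A).
Variables (V : zmodType) (actV : V -> W -> V) (T : zmodType) (tau : V -> WS -> T).

Definition orbit_powers (w : W) : Prop :=
  exists (n : int) (m : nat), w = iota (zpow_fun sigma sigma' n (a ^+ m)).

Lemma orbit_powers_iter i : orbit_powers (iota (iter i sigma' a)).
Proof.
by exists (if i is j.+1 then Negz j else 0), 1%N; case: i => [|j]; rewrite expr1.
Qed.

Lemma Vheight_Vinf v :
  Vheight iota a sigma' actV v -> Vinf iota a sigma' actV v.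
Proof. by case=> [[l [_ vl]]|[_ v_inf]]; [exists l|]. Qed.

Lemma Vinf_tensor_vanish v s :
  rmorph_prop iota -> rmorph_prop phi -> inverts orbit_powers phi ->
  balanced phi actV tau -> Vinf iota a sigma' actV v -> tau v s = 0.
Proof.
move=> iota_rm phi_rm phi_inv tau_bal [l vl].
have [t pt] : exists t, (phi \o iota) (\prod_(i < l.+1) iter i sigma' a) * t = 1.
  rewrite (rmorph_prop_prod _ _ (rmorph_prop_comp iota_rm phi_rm)).
  apply: (prod_rinvertible _ (F := fun i => phi (iota (iter i sigma' a)))) => i.
  by have [t [it _]] := phi_inv _ (orbit_powers_iter i); exists t.
exact: balanced_annihilated tau_bal vl pt.
Qed.

End LevelVanishing.

Theorem proposition2p4
  (k : fieldType) (A : pzRingType) (eta : k -> A) (hA : kalg_structure eta)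
  (a : A) (ha : central a)
  (sigma sigma' : A -> A) (hsigma : kalg_aut eta sigma sigma')
  (W : pzRingType) (iota : A -> W) (x y : W) (hW : is_GWA a sigma iota x y)
  (WS : pzRingType) (phi : W -> WS)
  (hWS : is_localization
           (fun w => exists (n : int) (m : nat), w = iota (zpow_fun sigma sigma' n (a ^+ m)))
           phi)
  (V : zmodType) (actV : V -> W -> V) (hV : rmodule_prop actV)
  (VS : zmodType) (tauV : V -> WS -> VS) (actVS : VS -> WS -> VS)
  (hVS : is_tensor phi actV tauV actVS)
  (Q : zmodType) (actQ : Q -> W -> Q) (pi : V -> Q)
  (hQ : is_quotient actV (Vheight iota a sigma' actV) actQ pi)
  (QS : zmodType) (tauQ : Q -> WS -> QS) (actQS : QS -> WS -> QS)
  (hQS : is_tensor phi actQ tauQ actQS) :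
  exists f : VS -> QS,
    [/\ additive_prop f, bijective f &
      forall t s, f (actVS t s) = actQS (f t) s].
Proof.
apply: (tensor_quotient_iso hVS hQ hQS) => v s /Vheight_Vinf v_inf.
have [iota_rm _] := hW.
have [phi_rm [phi_inv _]] := hWS.
have [_ tauV_bal _ _] := hVS.
exact: (Vinf_tensor_vanish (sigma := sigma) s iota_rm phi_rm phi_inv tauV_bal v_inf).
Qed.
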